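(* Let $v_{i_1},\dots,v_{i_m}$ be distinct variables. For all $n\in\mathbb{N}$ and all $e,f,g_1,\dots,g_m,h_1,\dots,h_m\in\mathsf{Exp}/{\sim}$: if $e\sim^{(n)}f$ and $g_j\sim^{(n)}h_j$ for all $1\le j\le m$, then $e[(g_1,\dots,g_m)/(v_{i_1},\dots,v_{i_m})]\sim^{(n)}f[(h_1,\dots,h_m)/(v_{i_1},\dots,v_{i_m})]$.
   Context: Fix variables $V=\{v_1,v_2,\dots\}$ and letters $\Sigma$. Expressions: $e\in\mathsf{Exp}::=0\mid v\ (v\in V)\mid a.e\mid e+f\mid\mu v.e$ ($\mu v$ binds $v$); $e[\vec f/\vec v]$ is simultaneous capture-avoiding substitution. The prechart $(\mathsf{Exp},\partial)$: least relations with $a.e\xrightarrow{a}e$; $v\rhd v$; $e+f$ has all transitions and outputs of $e$ and of $f$; $\mu w.e\rhd v$ if $e\rhd v$, $v\ne w$; $\mu v.e\xrightarrow{a}e'[\mu v.e/v]$ if $e\xrightarrow{a}e'$. Bisimilarity $\sim$ on $\mathsf{Exp}$ (largest relation such that related expressions have equal output sets and matching transitions to related expressions) is a congruence for all operations including substitution, so these operations are well defined on $\mathsf{Exp}/{\sim}$, which is a prechart via $[e]\xrightarrow{a}[e']$ iff $e\xrightarrow{a}e'$ and $[e]\rhd v$ iff $e\rhd v$. Stratified bisimilarity on this prechart: $x\sim^{(0)}y$ always; $x\sim^{(k+1)}y$ iff $x,y$ have the same outputs, every $x\xrightarrow{a}x'$ is matched by some $y\xrightarrow{a}y'$ with $x'\sim^{(k)}y'$,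 and symmetrically. *)

From mathcomp Require Import all_boot.
Set Implicit Arguments. Unset Strict Implicit. Unset Printing Implicit Defensive.

(* Variables V = {v_0, v_1, ...} are represented by their indices (nat);
   letters are an arbitrary type A (the alphabet Sigma). *)
Inductive Exp (A : Type) : Type :=
| Zero : Exp A
| Var : nat -> Exp A
| Act : A -> Exp A -> Exp A
| Plus : Exp A -> Exp A -> Exp A
| Mu : nat -> Exp A -> Exp A.
Arguments Zero {A}.
Arguments Var {A} _.

Section Defs.
Variable A : Type.

Fixpoint fv (e : Exp A) : seq nat :=
  match e with
  | Zero => [::]
  | Var v => [:: v]
  | Act _ e0 => fv e0
  | Plus e1 e2 => fv e1 ++ fv e2
  | Mu w e0 => [seq u <- fv e0 | u != w]
  end.

(* The bound variable of a mu is always renamed to a fresh one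
   (larger than every variable of the body and of the relevant s u),
   so the result is the usual capture-avoiding substitution up to
   alpha-renaming. *)
Fixpoint subst (s : nat -> Exp A) (e : Exp A) : Exp A :=
  match e with
  | Zero => Zero
  | Var v => s v
  | Act a e0 => Act a (subst s e0)
  | Plus e1 e2 => Plus (subst s e1) (subst s e2)
  | Mu w e0 =>
      let z := (foldr maxn w (fv e0 ++ flatten [seq fv (s u) | u <- fv e0])).+1 in
      Mu z (subst (fun u => if u == w then Var z else s u) e0)
  end.

Definition subst1 (v : nat) (f : Exp A) : nat -> Exp A :=
  fun u => if u == v then f else Var u.

Definition substm (m : nat) (i : 'I_m -> nat) (g : 'I_m -> Exp A)
  : nat -> Exp A :=
  fun u => match [pick j | i j == u] with Some j => g j | None => Var u end.

Inductive step : Exp A -> A -> Exp A -> Prop :=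
| st_act a e : step (Act a e) a e
| st_plusl e f a e' : step e a e' -> step (Plus e f) a e'
| st_plusr e f a f' : step f a f' -> step (Plus e f) a f'
| st_mu v e a e' : step e a e' -> step (Mu v e) a (subst (subst1 v (Mu v e)) e').

Inductive out : Exp A -> nat -> Prop :=
| out_var v : out (Var v) v
| out_plusl e f v : out e v -> out (Plus e f) v
| out_plusr e f v : out f v -> out (Plus e f) v
| out_mu w e v : out e v -> v <> w -> out (Mu w e) v.

Definition bisimulation (R : Exp A -> Exp A -> Prop) : Prop :=
  forall e f, R e f ->
    (forall v, out e v <-> out f v) /\
    (forall a e', step e a e' -> exists f', step f a f' /\ R e' f') /\
    (forall a f', step f a f' -> exists e', step e a e' /\ R e' f').

Definition bisim (e f : Exp A) : Prop :=
  exists R, bisimulation R /\ R e f.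

(* The quotient prechart Exp/~, described through representatives:
   [x] -a-> [y] iff some representatives make a transition, and
   [x] |> v iff some representative outputs v. *)
Definition qstep (x : Exp A) (a : A) (y : Exp A) : Prop :=
  exists x' y', bisim x x' /\ bisim y y' /\ step x' a y'.

Definition qout (x : Exp A) (v : nat) : Prop :=
  exists x', bisim x x' /\ out x' v.

(* Stratified bisimilarity on Exp/~ (pulled back to representatives) *)
Fixpoint strat (k : nat) (x y : Exp A) : Prop :=
  match k with
  | 0 => True
  | k'.+1 =>
      (forall v, qout x v <-> qout y v) /\
      (forall a x', qstep x a x' -> exists y', qstep y a y' /\ strat k' x' y') /\
      (forall a y', qstep y a y' -> exists x', qstep x a x' /\ strat k' x' y')
  end.

End Defs.

From mathcomp Require Import all_boot.
From Stdlib Require Import FunctionalExtensionality PropExtensionality.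
Set Implicit Arguments. Unset Strict Implicit.

(* Send an expression to its depth-k behaviour tree: its outputs together with,
   for each transition, the label and the depth-(k-1) tree of the successor.
   Depth-k stratified bisimilarity
   on Exp/~ is exactly equality of depth-k trees, and substitution is
   compositional on trees: the tree of e[s] grafts the tree of s v at every
   output v of the tree of e. Both sides of the theorem are therefore computed
   from equal trees. Compositionality goes by induction on k and then on e; in
   the mu case, unfolding and substituting commute up to the renaming of the
   bound variable, which at depth k follows from compositionality at depth k
   and associativity of grafting. *)

Lemma leq_foldr_maxn (s : seq nat) m x : x \in s -> x <= foldr maxn m s.
Proof.
elim: s => //= y s IHs; rewrite inE => /predU1P [->|/IHs le_x].
- exact: leq_maxl.
- exact: leq_trans le_x (leq_maxr _ _).
Qed.

Section Syntax.
Variable A : Type.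
Implicit Types (e x y : Exp A) (s : nat -> Exp A).

Lemma out_inv x u : out x u ->
  match x with
  | Var v => u = v
  | Plus e f => out e u \/ out f u
  | Mu w e => out e u /\ u <> w
  | _ => False
  end.
Proof. by case=> *; auto. Qed.

Lemma step_inv x a y : step x a y ->
  match x with
  | Act b e => a = b /\ y = e
  | Plus e f => step e a y \/ step f a y
  | Mu w e => exists2 e', step e a e' & y = subst (subst1 w (Mu w e)) e'
  | _ => False
  end.
Proof. by case=> *; eauto. Qed.

Lemma fv_out x v : out x v -> v \in fv x.
Proof.
elim=> {x v} /= [v|e f v _|e f v _|w e v _ ev_in v_neq_w]; rewrite ?mem_cat.
- exact: mem_head.
- by move->.
- by move->; rewrite orbT.
- by rewrite mem_filter ev_in andbT; apply/eqP.
Qed.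

Lemma mem_fv_subst s e u :
  u \in fv (subst s e) -> exists2 v, v \in fv e & u \in fv (s v).
Proof.
elim: e s => [|v|b e IHe|e1 IH1 e2 IH2|w e IHe] s /=.
- by [].
- by exists v; rewrite ?inE.
- exact: IHe.
- rewrite mem_cat => /orP [/IH1|/IH2] [v v_in u_in];
    by exists v; rewrite // mem_cat v_in ?orbT.
- rewrite mem_filter => /andP [u_fresh /IHe [v v_in]] /=.
  case: eqP => [_|/eqP v_neq_w u_in].
    by rewrite inE => /eqP u_eq; rewrite u_eq eqxx in u_fresh.
  by exists v; rewrite // mem_filter v_neq_w.
Qed.

Definition rebind s w z : nat -> Exp A := fun u => if u == w then Var z else s u.

Definition mu_binder s w e : nat :=
  (foldr maxn w (fv e ++ flatten [seq fv (s u) | u <- fv e])).+1.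

Lemma subst_Mu s w e :
  subst s (Mu w e) = Mu (mu_binder s w e) (subst (rebind s w (mu_binder s w e)) e).
Proof. by []. Qed.

Lemma mu_binder_fresh s w e v : v \in fv e -> mu_binder s w e \notin fv (s v).
Proof.
move=> v_in; apply/negP => binder_in.
have : mu_binder s w e \in fv e ++ flatten [seq fv (s u) | u <- fv e].
  by rewrite mem_cat; apply/orP; right; apply/flatten_mapP; exists v.
by move/(leq_foldr_maxn w); rewrite ltnn.
Qed.

Lemma fv_step x a y : step x a y -> {subset fv y <= fv x}.
Proof.
elim=> {x a y} /= [b e|e f a e' _ IH|e f a f' _ IH|w e a e' _ IH] u //.
- by rewrite mem_cat => /IH->.
- by rewrite mem_cat => /IH->; rewrite orbT.
case/mem_fv_subst=> v /IH v_in; rewrite /subst1.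
case: eqP => [//|/eqP v_neq_w]; rewrite inE => /eqP->.
by rewrite mem_filter v_neq_w.
Qed.

Lemma out_subst s e u : out (subst s e) u <-> exists2 v, out e v & out (s v) u.
Proof.
elim: e s u => [|v|b e IHe|e1 IH1 e2 IH2|w e IHe] s u.
- by split => [/out_inv|[v /out_inv]].
- split => [|[v' /out_inv -> //]]; exists v => //; constructor.
- by split => [/out_inv|[v /out_inv]].
- split => [/out_inv [/IH1|/IH2] [v ev su]|[v /out_inv [ev|ev] su]].
  + by exists v => //; apply: out_plusl.
  + by exists v => //; apply: out_plusr.
  + by apply/out_plusl/IH1; exists v.
  + by apply/out_plusr/IH2; exists v.
- rewrite subst_Mu; set z := mu_binder s w e.
  split => [/out_inv [/IHe [v ev] /= su u_neq_z]|[v /out_inv [ev v_neq_w] su]].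
  + move: su; rewrite /rebind; case: eqP => [_ /out_inv //|/eqP v_neq_w su].
    by exists v => //; apply: out_mu => // v_eq_w; rewrite v_eq_w eqxx in v_neq_w.
  + apply: out_mu => [|u_eq_z]; first by apply/IHe; exists v; rewrite /rebind; case: (v =P w).
    by move: (mu_binder_fresh s w (fv_out ev)); rewrite -/z -u_eq_z (fv_out su).
Qed.

End Syntax.

(* Maximal implicits make [step_inv] usable as an intro-pattern view. *)
Arguments step_inv {A x a y}.

Section Trees.
Variable A : Type.
Implicit Types (e x y : Exp A) (s : nat -> Exp A).

(* [Tree k] approximates the final coalgebra of the prechart functor to depth
   [k]: a [Tree k.+1] is a set of outputs and a Prop-valued (hence arbitrarily
   branching) labelled transition relation into [Tree k]. *)
Fixpoint Tree (k : nat) : Type :=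
  match k with 0 => unit | k.+1 => ((nat -> Prop) * (A -> Tree k -> Prop))%type end.

Fixpoint trunc k : Tree k.+1 -> Tree k :=
  match k return Tree k.+1 -> Tree k with
  | 0 => fun _ => tt
  | k.+1 => fun T => (T.1, fun a X => exists2 Y, T.2 a Y & X = @trunc k Y)
  end.

(* Grafting mirrors the semantics of [subst]: the root keeps the transitions of
   [T], grafted below, and acquires those of [r v] for every output [v] of [T]. *)
Fixpoint tsubst k : Tree k -> (nat -> Tree k) -> Tree k :=
  match k return Tree k -> (nat -> Tree k) -> Tree k with
  | 0 => fun _ _ => tt
  | k.+1 => fun T r =>
      (fun u => exists2 v, T.1 v & (r v).1 u,
       fun a X => (exists2 T', T.2 a T' & X = tsubst T' (fun v => @trunc k (r v)))
                  \/ exists2 v, T.1 v & (r v).2 a X)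
  end.

Fixpoint den k x : Tree k :=
  match k return Tree k with
  | 0 => tt
  | k.+1 => (out x, fun a X => exists2 x', step x a x' & X = den k x')
  end.

Arguments trunc : clear implicits.

Lemma tree_eq k (T1 T2 : Tree k.+1) :
  (forall u, T1.1 u <-> T2.1 u) -> (forall a X, T1.2 a X <-> T2.2 a X) -> T1 = T2.
Proof.
case: T1 T2 => [o1 t1] [o2 t2] /= eq_o eq_t; congr pair.
- by apply: functional_extensionality => u; apply: propositional_extensionality.
- do 2 apply: functional_extensionality => ?; exact: propositional_extensionality.
Qed.

Lemma tree0_eq (T1 T2 : Tree 0) : T1 = T2.
Proof. by case: T1 T2 => [] []. Qed.

Lemma steps_trunc k (T : Tree k.+2) a X :
  (trunc k.+1 T).2 a X = exists2 Y : Tree k.+1, T.2 a Y & X = trunc k Y.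
Proof. by []. Qed.

Lemma outs_tsubst k (T : Tree k.+1) r u :
  (tsubst T r).1 u = exists2 v, T.1 v & (r v).1 u.
Proof. by []. Qed.

Lemma steps_tsubst k (T : Tree k.+1) r a X :
  (tsubst T r).2 a X =
  ((exists2 T' : Tree k, T.2 a T' & X = tsubst T' (fun v => trunc k (r v)))
   \/ exists2 v, T.1 v & (r v).2 a X).
Proof. by []. Qed.

Lemma outs_den k x u : (den k.+1 x).1 u = out x u.
Proof. by []. Qed.

Lemma steps_den k x a X : (den k.+1 x).2 a X = exists2 x', step x a x' & X = den k x'.
Proof. by []. Qed.

Definition treeE :=
  (steps_trunc, outs_tsubst, steps_tsubst, outs_den, steps_den).

Lemma trunc_den k x : trunc k (den k.+1 x) = den k x.
Proof.
elim: k x => [|k IHk] x; first exact: tree0_eq.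
apply: tree_eq => [//|a X]; rewrite !treeE; split.
- by case=> _ [x' xx' ->] ->; exists x'; rewrite ?IHk.
- by case=> x' xx' ->; exists (den k.+1 x'); [exists x'|rewrite IHk].
Qed.

Lemma trunc_tsubst k (T : Tree k.+1) r :
  trunc k (tsubst T r) = tsubst (trunc k T) (fun v => trunc k (r v)).
Proof.
elim: k T r => [|k IHk] T r; first exact: tree0_eq.
apply: tree_eq => [//|a X]; rewrite !treeE; split.
- case=> Y [[T' TT' ->]|[v Tv rvY]] ->.
  + by left; exists (trunc k T'); [exists T'|rewrite IHk].
  + by right; exists v => //; exists Y.
- case=> [[_ [Y TY ->] ->]|[v Tv [Y rvY ->]]].
  + exists (tsubst (Y : Tree k.+1) (fun v => trunc k.+1 (r v))); first by left; exists Y.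
    by rewrite IHk.
  + by exists Y => //; right; exists v.
Qed.

Lemma tsubst_Var k (T : Tree k) : tsubst T (fun v => den k (Var v)) = T.
Proof.
elim: k T => [|k IHk] T; first exact: tree0_eq.
apply: tree_eq => [u|a X]; rewrite !treeE.
- by split => [[v Tv /out_inv ->]|Tu] //; exists u => //; constructor.
- have -> : (fun v => trunc k (den k.+1 (@Var A v))) = fun v => den k (Var v).
    by apply: functional_extensionality => v; rewrite trunc_den.
  split => [[[T' TT' ->]|[v _]]|TX]; first by rewrite IHk.
    by rewrite steps_den => -[x' /step_inv].
  by left; exists X; rewrite ?IHk.
Qed.

Lemma tsubstA k (T : Tree k) r1 r2 :
  tsubst (tsubst T r1) r2 = tsubst T (fun v => tsubst (r1 v) r2).
Proof.
elim: k T r1 r2 => [|k IHk] T r1 r2; first exact: tree0_eq.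
have tsubst_trunc T' :
    tsubst (tsubst T' (fun v => trunc k (r1 v))) (fun v => trunc k (r2 v))
    = tsubst T' (fun v => trunc k (tsubst (r1 v) r2)).
  rewrite IHk; congr tsubst; apply: functional_extensionality => v.
  by rewrite trunc_tsubst.
apply: tree_eq => [u|a X]; rewrite !treeE.
- split => [[v [w Tw r1wv] r2vu]|[w Tw [v r1wv r2vu]]]; first by exists w => //; exists v.
  by exists v => //; exists w.
- split => [[[T'' [[T' TT' ->]|[u Tu r1uT'']] ->]|[v [u Tu r1uv] r2vX]]|].
  + by left; exists T'; rewrite ?tsubst_trunc.
  + by right; exists u => //; left; exists T''.
  + by right; exists u => //; right; exists v.
  case=> [[T' TT' ->]|[u Tu [[Y r1uY ->]|[v r1uv r2vX]]]].
  + left; exists (tsubst T' (fun v => trunc k (r1 v))); first by left; exists T'.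
    by rewrite tsubst_trunc.
  + by left; exists Y => //; right; exists u.
  + by right; exists v => //; exists u.
Qed.

Lemma eq_tsubst_den k x r1 r2 :
  {in fv x, r1 =1 r2} -> tsubst (den k x) r1 = tsubst (den k x) r2.
Proof.
elim: k x r1 r2 => [|k IHk] x r1 r2 eq_r; first exact: tree0_eq.
have eq_r_step a x' : step x a x' -> {in fv x', forall v, trunc k (r1 v) = trunc k (r2 v)}.
  by move=> xx' v /(fv_step xx') /eq_r ->.
apply: tree_eq => [u|a X]; rewrite !treeE.
- by split=> -[v xv ru]; exists v; rewrite // ?(eq_r v (fv_out xv)) // -(eq_r v (fv_out xv)).
split=> -[[_ [x' xx' ->] ->]|[v xv rX]].
- by left; exists (den k x'); [exists x'|exact: IHk (eq_r_step _ _ xx')].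
- by right; exists v; rewrite // -(eq_r v (fv_out xv)).
- by left; exists (den k x'); [exists x'|symmetry; exact: IHk (eq_r_step _ _ xx')].
- by right; exists v; rewrite // (eq_r v (fv_out xv)).
Qed.

Lemma steps_den_Plus k e f a X :
  (den k.+1 (Plus e f)).2 a X <-> (den k.+1 e).2 a X \/ (den k.+1 f).2 a X.
Proof.
rewrite !steps_den; split=> [[y /step_inv [ey|fy] ->]|[[y ey ->]|[y fy ->]]].
- by left; exists y.
- by right; exists y.
- by exists y; first exact: st_plusl.
- by exists y; first exact: st_plusr.
Qed.

Section SubstLevel.
Variable k : nat.
Hypothesis den_subst_k :
  forall s e, den k (subst s e) = tsubst (den k e) (fun v => den k (s v)).

Lemma den_subst1_fresh z M x : z \notin fv x -> den k (subst (subst1 z M) x) = den k x.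
Proof.
move=> z_fresh; rewrite den_subst_k -[RHS]tsubst_Var; apply: eq_tsubst_den => v v_in.
by rewrite /subst1 ifN_eq //; apply: contraNneq z_fresh => <-.
Qed.

(* The binder chosen by [subst] is fresh for every [s v] with [v] free in [e],
   so on those variables the extra substitution for it is invisible. *)
Lemma den_subst_unfold s w e e' : {subset fv e' <= fv e} ->
  let z := mu_binder s w e in
  den k (subst (subst1 z (subst s (Mu w e))) (subst (rebind s w z) e'))
  = den k (subst s (subst (subst1 w (Mu w e)) e')).
Proof.
move=> sub_e' z; rewrite !den_subst_k !tsubstA; apply: eq_tsubst_den => v /sub_e' v_in.
rewrite -!den_subst_k; case: (v =P w) => [->|/eqP v_neq_w].
  by rewrite /rebind /subst1 eqxx [subst _ (Var _)]/= eqxx.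
have -> : rebind s w z v = s v by rewrite /rebind ifN_eq.
have -> : subst1 w (Mu w e) v = Var v by rewrite /subst1 ifN_eq.
by rewrite den_subst1_fresh // mu_binder_fresh.
Qed.

Lemma steps_den_Mu z b a X :
  (den k.+1 (Mu z b)).2 a X <->
  exists2 Y, (den k.+1 b).2 a Y & X = tsubst Y (fun v => den k (subst1 z (Mu z b) v)).
Proof.
rewrite steps_den; split=> [[_ /step_inv [b' bb' ->] ->]|[Y]].
  by exists (den k b'); [rewrite steps_den; exists b'|exact: den_subst_k].
rewrite steps_den => -[b' bb' ->] ->.
by exists (subst (subst1 z (Mu z b)) b'); [exact: st_mu|rewrite den_subst_k].
Qed.

Definition subst_steps_spec e := forall s a X,
  (den k.+1 (subst s e)).2 a X <->
  (exists2 e', step e a e' & X = den k (subst s e'))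
  \/ exists2 v, out e v & (den k.+1 (s v)).2 a X.

Lemma subst_steps_Mu w e : subst_steps_spec e -> subst_steps_spec (Mu w e).
Proof.
move=> IHe s a X; rewrite subst_Mu steps_den_Mu; set z := mu_binder s w e.
have fresh_step v y : v \in fv e -> step (s v) a y ->
    tsubst (den k y) (fun u => den k (subst1 z (subst s (Mu w e)) u)) = den k y.
  move=> ve sy; rewrite -den_subst_k den_subst1_fresh //.
  by apply: contra (mu_binder_fresh s w ve) => /(fv_step sy).
split.
- case=> Y /IHe [[e' ee' ->]|[v ev s'vY]] ->.
  + left; exists (subst (subst1 w (Mu w e)) e'); first exact: st_mu.
    by rewrite -den_subst_k den_subst_unfold //; apply: fv_step ee'.
  + move: s'vY; rewrite /rebind; case: eqP => [_|/eqP v_neq_w].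
      by rewrite steps_den => -[y /step_inv].
    rewrite !steps_den => -[y sy ->]; right; exists v.
      by apply: out_mu => // v_eq_w; rewrite v_eq_w eqxx in v_neq_w.
    by exists y; last exact: fresh_step (fv_out ev) sy.
- case=> [[_ /step_inv [e' ee' ->] ->]|[v /out_inv [ev v_neq_w]]].
  + exists (den k (subst (rebind s w z) e')); first by apply/IHe; left; exists e'.
    by rewrite -den_subst_k den_subst_unfold //; apply: fv_step ee'.
  + rewrite steps_den => -[y sy ->].
    exists (den k y); last by symmetry; exact: fresh_step (fv_out ev) sy.
    apply/IHe; right; exists v => //; rewrite /rebind ifN_eq; last exact/eqP.
    by rewrite steps_den; exists y.
Qed.

Lemma subst_steps e : subst_steps_spec e.
Proof.
elim: e => [|v|b e IHe|e1 IH1 e2 IH2|w e IHe] s a X; last exact: subst_steps_Mu.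
- by rewrite steps_den; split=> [[x /step_inv []]|[[e' /step_inv []]|[v /out_inv []]]].
- split=> [svX|[[e' /step_inv []]|[u /out_inv -> //]]].
  by right; exists v => //; constructor.
- rewrite steps_den.
  split=> [[_ /step_inv [-> ->] ->]|[[_ /step_inv [-> ->] ->]|[v /out_inv []]]].
  + by left; exists e; first constructor.
  + by exists (subst s e); first constructor.
- rewrite steps_den_Plus IH1 IH2.
  split=> [[[[e' ee' ->]|[v ev svX]]|[[e' ee' ->]|[v ev svX]]]|].
    all: eauto using ex_intro2, step, out.
  case=> [[e' /step_inv [ee'|ee'] ->]|[v /out_inv [ev|ev] svX]].
  all: eauto 6 using ex_intro2, step, out.
Qed.

Lemma den_subst_succ s e :
  den k.+1 (subst s e) = tsubst (den k.+1 e) (fun v => den k.+1 (s v)).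
Proof.
have trunc_s : (fun v => trunc k (den k.+1 (s v))) = fun v => den k (s v).
  by apply: functional_extensionality => v; rewrite trunc_den.
apply: tree_eq => [u|a X]; first exact: out_subst.
rewrite subst_steps steps_tsubst trunc_s.
split=> [[[e' ee' ->]|svX]|[[T' eT' ->]|svX]]; try by right.
- by left; exists (den k e'); [rewrite steps_den; exists e'|rewrite den_subst_k].
- move: eT'; rewrite steps_den => -[e' ee' ->].
  by left; exists e' => //; rewrite den_subst_k.
Qed.

End SubstLevel.

Lemma den_subst k s e : den k (subst s e) = tsubst (den k e) (fun v => den k (s v)).
Proof. by elim: k s e => [|k IHk] s e; [exact: tree0_eq|exact: den_subst_succ]. Qed.

End Trees.

Section Stratified.
Variable A : Type.
Implicit Types (x y : Exp A).

Lemma bisim_refl x : bisim x x.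
Proof. by exists eq; split=> // e _ <-; split=> //; split=> a e' ee'; exists e'. Qed.

Lemma bisim_sym x y : bisim x y -> bisim y x.
Proof.
case=> R [R_bisim Rxy]; exists (fun e f => R f e); split=> // e f /R_bisim [eq_out [fwd bwd]].
by split=> // v; rewrite eq_out.
Qed.

Lemma bisim_trans x y z : bisim x y -> bisim y z -> bisim x z.
Proof.
case=> R1 [R1_bisim R1xy] [R2 [R2_bisim R2yz]].
exists (fun e g => exists2 f, R1 e f & R2 f g); split; last by exists y.
move=> e g [f /R1_bisim [out1 [fwd1 bwd1]] /R2_bisim [out2 [fwd2 bwd2]]].
split; first by move=> v; rewrite out1 out2.
split=> a.
- move=> e' /fwd1 [f' [ff' R1']]; have [g' [gg' R2']] := fwd2 _ _ ff'.
  by exists g'; split=> //; exists f'.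
- move=> g' /bwd2 [f' [ff' R2']]; have [e' [ee' R1']] := bwd1 _ _ ff'.
  by exists e'; split=> //; exists f'.
Qed.

Lemma bisim_out x y v : bisim x y -> out x v -> out y v.
Proof. by case=> R [R_bisim /R_bisim [eq_out _]] /eq_out. Qed.

Lemma bisim_step x y a x' : bisim x y -> step x a x' -> exists2 y', step y a y' & bisim x' y'.
Proof.
case=> R [R_bisim /R_bisim [_ [fwd _]]] /fwd [y' [yy' R']].
by exists y' => //; exists R.
Qed.

Lemma bisim_den k x y : bisim x y -> den k x = den k y.
Proof.
elim: k x y => [|k IHk] x y bxy; first exact: tree0_eq.
apply: tree_eq => [u|a X]; rewrite !treeE.
  by split; apply: bisim_out; last apply: bisim_sym.
split=> -[x' xx' ->].
- by have [y' yy' /IHk ->] := bisim_step bxy xx'; exists y'.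
- by have [y' yy' /IHk ->] := bisim_step (bisim_sym bxy) xx'; exists y'.
Qed.

Lemma qoutE x v : qout x v <-> out x v.
Proof.
split=> [[x' [bxx' x'v]]|xv]; last by exists x; split=> //; apply: bisim_refl.
exact: bisim_out (bisim_sym bxx') x'v.
Qed.

Lemma qstepE x a x' : qstep x a x' <-> exists2 y, step x a y & bisim y x'.
Proof.
split=> [[x1 [y1 [bxx1 [bx'y1 x1y1]]]]|[y xy byx']].
  have [y xy by1] := bisim_step (bisim_sym bxx1) x1y1.
  by exists y => //; apply: bisim_trans (bisim_sym by1) (bisim_sym bx'y1).
by exists x, y; split; [apply: bisim_refl|split=> //; apply: bisim_sym].
Qed.

Lemma step_qstep x a y : step x a y -> qstep x a y.
Proof. by move=> xy; apply/qstepE; exists y => //; apply: bisim_refl. Qed.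

Lemma strat_den k x y : strat k x y <-> den k x = den k y.
Proof.
elim: k x y => [|k IHk] x y; first by split=> // _; apply: tree0_eq.
have transfer x1 y1 :
    (forall a x', qstep x1 a x' -> exists y', qstep y1 a y' /\ den k x' = den k y') ->
    forall a X, (den k.+1 x1).2 a X -> (den k.+1 y1).2 a X.
  move=> fwd a X; rewrite !steps_den => -[x' xx' ->].
  have [y' [/qstepE [y'' yy'' by''] ->]] := fwd a x' (step_qstep xx').
  by exists y'' => //; apply: bisim_den (bisim_sym by'').
have lift x1 y1 : den k.+1 x1 = den k.+1 y1 ->
    forall a x', qstep x1 a x' -> exists y', qstep y1 a y' /\ den k x' = den k y'.
  move=> E a x' /qstepE [x'' xx'' bx'']; have : (den k.+1 y1).2 a (den k x'').
    by rewrite -E steps_den; exists x''.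
  rewrite steps_den => -[y' yy' Ey']; exists y'; split; first exact: step_qstep.
  by rewrite -Ey' (bisim_den k bx'').
split=> [[eq_out [fwd bwd]]|E].
- apply: tree_eq => [u|a X]; first by rewrite !outs_den -!qoutE.
  split; apply: transfer => b x'.
    by move=> /fwd [y' [yy' /IHk E']]; exists y'.
  by move=> /bwd [y' [yy' /IHk E']]; exists y'.
- split; first by move=> v; rewrite !qoutE -!(outs_den k) E.
  split=> a x'.
    by move=> /(lift _ _ E) [y' [yy' E']]; exists y'; rewrite IHk.
  by move=> /(lift _ _ (esym E)) [y' [yy' E']]; exists y'; rewrite IHk.
Qed.

End Stratified.

Theorem mainTheorem11 (A : Type) (m : nat) (i : 'I_m -> nat)
    (i_distinct : injective i) (n : nat) (e f : Exp A)
    (g h : 'I_m -> Exp A) :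
  strat n e f ->
  (forall j : 'I_m, strat n (g j) (h j)) ->
  strat n (subst (substm i g) e) (subst (substm i h) f).
Proof.
move=> /strat_den den_ef den_gh; apply/strat_den.
rewrite !den_subst den_ef; congr tsubst; apply: functional_extensionality => u.
by rewrite /substm; case: pickP => // j _; apply/strat_den.
Qed.
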